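(* Let $Q,\tau$ be positive even integers and let $A$ and $Z$ be $0$-$1$ matrices of dimensions $\frac{Q}{2}\times\frac{\tau}{2}$, where $A$ is fixed and the entries of $Z$ are i.i.d. $0$-$1$ random variables with $\mathbb{E}(z_{ij})=\lambda$. If $\lambda<\frac{2}{\tau}$, then $$\mathbb{E}\big(w(I(A\wedge Z))\big)\ge\frac{\lambda}{2}\cdot w(A).$$
   Context: For a $0$-$1$ matrix $X$, $w(X)$ denotes the number of entries equal to $1$. $I(X)$ is the $0$-$1$ matrix of the same dimensions that keeps only the first nonzero entry in each row of $X$: $I(X)_{i,j}=1$ iff $X_{i,j}=1$ and $X_{i,\ell}=0$ for every $\ell<j$, and $I(X)_{i,j}=0$ otherwise. $A\wedge Z$ is the coordinate-wise conjunction (product) of $A$ and $Z$. *)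

From HB Require Import structures.
From mathcomp Require Import all_boot all_order all_algebra.
Set Implicit Arguments. Unset Strict Implicit. Unset Printing Implicit Defensive.
Import Order.TTheory GRing.Theory Num.Theory.

(* 0-1 matrices are boolean matrices; true = 1. *)

Definition weight m n (X : 'M[bool]_(m, n)) : nat :=
  #|[set ij : 'I_m * 'I_n | X ij.1 ij.2]|.

Definition first_ones m n (X : 'M[bool]_(m, n)) : 'M[bool]_(m, n) :=
  \matrix_(i, j) (X i j && [forall l : 'I_n, (l < j)%N ==> ~~ X i l]).

Definition mx_and m n (A Z : 'M[bool]_(m, n)) : 'M[bool]_(m, n) :=
  \matrix_(i, j) (A i j && Z i j).

Local Open Scope ring_scope.

Definition iid_bern_prob (R : nzRingType) (lam : R) m n (Z : 'M[bool]_(m, n)) : R :=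
  \prod_(i < m) \prod_(j < n) (if Z i j then lam else 1 - lam).

Definition iid_bern_expect (R : nzRingType) (lam : R) m n
    (f : 'M[bool]_(m, n) -> R) : R :=
  \sum_(Z : 'M[bool]_(m, n)) iid_bern_prob lam Z * f Z.

From mathcomp Require Import all_boot all_order all_algebra.
From mathcomp Require Import ring lra.
Import Order.TTheory GRing.Theory Num.Theory.
Local Open Scope ring_scope.

(* Row [i] of [I(A /\ Z)] contains a one exactly when row [i] of [A /\ Z] is
   nonzero, so by independence of the entries the expectation is
   [\sum_i (1 - \prod_j (1 - lam a_ij))].  The second Bonferroni inequality
   [\prod_j (1 - x_j) <= 1 - s + s^2/2] with [s = lam w_i <= lam tau/2 <= 1]
   bounds each term below by [s - s^2/2 >= s/2]. *)

Lemma weightE m n (X : 'M[bool]_(m, n)) :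
  weight X = (\sum_i \sum_j (X i j : nat))%N.
Proof.
rewrite /weight -sum1_card pair_big /= big_mkcond /=.
by apply: eq_bigr => -[i j] _; rewrite inE /=; case: (X i j).
Qed.

Lemma sum_first_ones_row m n (X : 'M[bool]_(m, n)) i :
  (\sum_j (first_ones X i j : nat))%N = [exists j, X i j].
Proof.
case: existsP => [[j0 Xj0] | noX]; last first.
  by rewrite big1 // => j _; rewrite mxE; case Xj: (X i j) => //; case: noX; exists j.
have [k Xk k_min] := arg_minnP (fun j : 'I_n => nat_of_ord j) Xj0.
have first_k : [forall l : 'I_n, (l < k)%N ==> ~~ X i l].
  apply/forallP => l; apply/implyP => lk; apply: contraTN lk => Xl.
  by rewrite -leqNgt k_min.
rewrite (bigD1 k) //= mxE Xk first_k big1 // => j jk; rewrite mxE.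
case Xj: (X i j) => //=; case: forallP => // /(_ k).
have kj : (k < j)%N by rewrite ltn_neqAle k_min // andbT (inj_eq val_inj) eq_sym.
by rewrite kj Xk.
Qed.

Lemma existsb_natrE (R : comPzRingType) (I : finType) (P : pred I) :
  (([exists i, P i] : nat)%:R : R) = 1 - \prod_i (if P i then 0 else 1).
Proof.
case: existsP => [[i0 Pi0] | noP]; first by rewrite (bigD1 i0) //= Pi0 mul0r subr0.
by rewrite big1 ?subrr // => i _; case: ifP => // Pi; case: noP; exists i.
Qed.

Lemma sum_bmx_prod (R : comPzRingType) m n (G : 'I_m -> 'I_n -> bool -> R) :
  \sum_(Z : 'M[bool]_(m, n)) \prod_i \prod_j G i j (Z i j)
  = \prod_i \prod_j (G i j true + G i j false).
Proof.
have -> : \prod_i \prod_j (G i j true + G i j false)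
        = \prod_(p : 'I_m * 'I_n) \sum_(b : bool) G p.1 p.2 b.
  by rewrite pair_big; apply: eq_bigr => p _; rewrite big_bool /= addrC.
rewrite bigA_distr_bigA /= (reindex (@Matrix bool m n)) /=; last first.
  by exists (@mx_val bool m n) => [f _ | [f] _].
by apply: eq_bigr => f _; rewrite pair_big; apply: eq_bigr => -[i j] _.
Qed.

Section IidBernoulli.
Variables (R : comNzRingType) (lam : R) (m n : nat).

Lemma eq_iid_bern_expect {f g : 'M[bool]_(m, n) -> R} :
  f =1 g -> iid_bern_expect lam f = iid_bern_expect lam g.
Proof. by move=> fg; apply: eq_bigr => Z _; rewrite fg. Qed.

Lemma iid_bern_expectD (f g : 'M[bool]_(m, n) -> R) :
  iid_bern_expect lam (fun Z => f Z + g Z)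
  = iid_bern_expect lam f + iid_bern_expect lam g.
Proof.
by rewrite /iid_bern_expect -big_split; apply: eq_bigr => Z _; rewrite mulrDr.
Qed.

Lemma iid_bern_expectN (f : 'M[bool]_(m, n) -> R) :
  iid_bern_expect lam (fun Z => - f Z) = - iid_bern_expect lam f.
Proof. by rewrite /iid_bern_expect -sumrN; apply: eq_bigr => Z _; rewrite mulrN. Qed.

Lemma iid_bern_expect_sum (I : Type) (r : seq I) (f : I -> 'M[bool]_(m, n) -> R) :
  iid_bern_expect lam (fun Z => \sum_(i <- r) f i Z)
  = \sum_(i <- r) iid_bern_expect lam (f i).
Proof.
rewrite /iid_bern_expect exchange_big /=.
by apply: eq_bigr => Z _; rewrite mulr_sumr.
Qed.

Lemma iid_bern_expect1 : iid_bern_expect lam (fun _ : 'M[bool]_(m, n) => 1) = 1.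
Proof.
rewrite /iid_bern_expect.
under eq_bigr do rewrite mulr1.
rewrite (@sum_bmx_prod _ _ _ (fun i j (b : bool) => if b then lam else 1 - lam)).
by apply: big1 => i _; apply: big1 => j _; rewrite addrC subrK.
Qed.

(* Only row [i0] is constrained, so the product measure factorises entry by entry. *)
Lemma iid_bern_expect_row_avoid (A : 'M[bool]_(m, n)) i0 :
  iid_bern_expect lam (fun Z => \prod_j (if A i0 j && Z i0 j then 0 else 1))
  = \prod_j (1 - (if A i0 j then lam else 0)).
Proof.
pose G i j (b : bool) : R :=
  (if b then lam else 1 - lam) * (if (i == i0) && A i j && b then 0 else 1).
have factorE (Z : 'M[bool]_(m, n)) :
    iid_bern_prob lam Z * \prod_j (if A i0 j && Z i0 j then 0 else 1)
    = \prod_i \prod_j G i j (Z i j).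
  under [RHS]eq_bigr do rewrite big_split; rewrite big_split /=.
  congr (_ * _); rewrite [RHS](bigD1 i0) //= eqxx [X in _ = _ * X]big1 ?mulr1 //.
  by move=> i ii0; apply: big1 => j _; rewrite (negbTE ii0).
rewrite /iid_bern_expect (eq_bigr _ (fun Z _ => factorE Z)) sum_bmx_prod.
rewrite /G (bigD1 i0) //= eqxx [X in _ * X]big1 ?mulr1 => [|i ii0].
  by apply: eq_bigr => j _; case: (A i0 j); rewrite /= ?mulr0 ?mulr1 ?subr0 ?addr0 //; ring.
by apply: big1 => j _; rewrite (negbTE ii0) /= !mulr1 addrC subrK.
Qed.

Lemma iid_bern_expect_weight_first_ones (A : 'M[bool]_(m, n)) :
  iid_bern_expect lam (fun Z => (weight (first_ones (mx_and A Z)))%:R)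
  = \sum_i (1 - \prod_j (1 - (if A i j then lam else 0))).
Proof.
have rowsE (Z : 'M[bool]_(m, n)) : (weight (first_ones (mx_and A Z)))%:R
    = \sum_i (1 - \prod_j (if A i j && Z i j then 0 else 1)) :> R.
  rewrite weightE natr_sum; apply: eq_bigr => i _.
  rewrite sum_first_ones_row (@existsb_natrE R _ (fun j => mx_and A Z i j)).
  by under eq_bigr do rewrite mxE.
rewrite (eq_iid_bern_expect rowsE) iid_bern_expect_sum; apply: eq_bigr => i _.
by rewrite iid_bern_expectD iid_bern_expectN iid_bern_expect1 iid_bern_expect_row_avoid.
Qed.

End IidBernoulli.

Section Bonferroni.
Variables (R : realFieldType) (I : Type).

Lemma prod1B_le (r : seq I) {x : I -> R} :
  (forall i, 0 <= x i <= 1) ->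
  \prod_(i <- r) (1 - x i)
    <= 1 - \sum_(i <- r) x i + (\sum_(i <- r) x i) ^+ 2 / 2.
Proof.
move=> x01; elim: r => [|a r IH]; first by rewrite !big_nil expr0n /= mul0r addr0 subr0.
rewrite !big_cons; have /andP [xa0 xa1] := x01 a.
have s0 : 0 <= \sum_(i <- r) x i by apply: sumr_ge0 => i _; case/andP: (x01 i).
move: IH s0; set s := \sum_(i <- r) x i; set P := \prod_(i <- r) _ => IH s0.
apply: le_trans (ler_wpM2l _ IH) _; first by rewrite subr_ge0.
rewrite -subr_ge0.
have -> : 1 - (x a + s) + (x a + s) ^+ 2 / 2 - (1 - x a) * (1 - s + s ^+ 2 / 2)
        = x a * (x a + s ^+ 2) / 2 by field.
by rewrite divr_ge0 // mulr_ge0 // addr_ge0 // sqr_ge0.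
Qed.

Lemma half_sum_le_1B_prod1B (r : seq I) (x : I -> R) :
  (forall i, 0 <= x i <= 1) -> \sum_(i <- r) x i <= 1 ->
  (\sum_(i <- r) x i) / 2 <= 1 - \prod_(i <- r) (1 - x i).
Proof.
move=> x01 s1; have := prod1B_le r x01.
have s0 : 0 <= \sum_(i <- r) x i by apply: sumr_ge0 => i _; case/andP: (x01 i).
move: s0 s1; set s := \sum_(i <- r) x i => s0 s1.
have s2 : s ^+ 2 <= s by rewrite expr2 ler_piMl.
lra.
Qed.

End Bonferroni.

Theorem lemma7p2 (R : realFieldType) (Q tau : nat)
    (hQ : (0 < Q)%N) (hQe : ~~ odd Q) (htau : (0 < tau)%N) (htaue : ~~ odd tau)
    (A : 'M[bool]_(Q %/ 2, tau %/ 2)) (lam : R)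
    (hlam0 : 0 <= lam) (hlam1 : lam <= 1)
    (hlam : lam < 2 / tau%:R) :
  iid_bern_expect lam (fun Z => (weight (first_ones (mx_and A Z)))%:R)
    >= lam / 2 * (weight A)%:R.
Proof.
set n := (tau %/ 2)%N.
have lam_n : lam * n%:R <= 1.
  have tauE : tau%:R = n%:R * 2 :> R by rewrite -natrM divnK // dvdn2.
  by move: hlam; rewrite ltr_pdivlMr ?ltr0n // tauE mulrA; lra.
rewrite iid_bern_expect_weight_first_ones weightE natr_sum mulr_sumr.
apply: ler_sum => i _; set x := fun j => if A i j then lam else 0.
have x01 j : 0 <= x j <= 1 by rewrite /x; case: (A i j); rewrite ?lexx ?ler01 ?hlam0.
have sumxE : \sum_j x j = lam * (\sum_j (A i j : nat))%:R.
  rewrite natr_sum mulr_sumr; apply: eq_bigr => j _.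
  by rewrite /x; case: (A i j); rewrite ?mulr1 ?mulr0.
have sumx1 : \sum_j x j <= 1.
  apply: le_trans lam_n; rewrite sumxE ler_wpM2l // ler_nat.
  by rewrite -[X in (_ <= X)%N]card_ord -sum1_card leq_sum // => j _; apply: leq_b1.
by rewrite mulrAC -sumxE half_sum_le_1B_prod1B.
Qed.
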